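(* Let $r\ge1$, $n$ be integers and let $\sigma,\sigma':\mathbb{Z}_n\to\{0,1\}$ satisfy $\mathrm{maj}_r(\sigma)=\sigma'$. Then $b(\sigma')\le b(\sigma)$.
   Context: Cells are elements of $\mathbb{Z}_n$, arithmetic mod $n$; $[a,b]$ denotes the cyclic interval $a,\dots,b$. The majority rule with radius $r$: $\mathrm{maj}_r(\sigma)(i)=0$ if among the cells of $[i-r,i+r]$ strictly more have value $0$ than $1$ under $\sigma$, and $=1$ otherwise. For $\beta\in\{0,1\}$, $B^\beta(\sigma)$ is the set of cell intervals $[i,j]$ with $\sigma(k)=\beta$ for all $k\in[i,j]$ and $\sigma(i-1)=\sigma(j+1)=1-\beta$; $B(\sigma)=B^0(\sigma)\cup B^1(\sigma)$ and $b(\sigma)=|B(\sigma)|$. *)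

From mathcomp Require Import all_boot.
Set Implicit Arguments. Unset Strict Implicit. Unset Printing Implicit Defensive.

(* Cells of Z_n are represented by 'I_n (n > 0 implicit once a cell exists);
   configurations are functions 'I_n -> bool, with true = 1, false = 0. *)

Lemma shift_lt (n : nat) (i : 'I_n) (d : nat) : (i + d) %% n < n.
Proof. apply: ltn_pmod. exact: leq_ltn_trans (leq0n i) (ltn_ord i). Qed.

Definition shift (n : nat) (i : 'I_n) (d : nat) : 'I_n := Ordinal (shift_lt i d).

Definition pred_cell (n : nat) (i : 'I_n) : 'I_n := shift i n.-1.
Definition succ_cell (n : nat) (i : 'I_n) : 'I_n := shift i 1.

(* The cells of the window [i-r, i+r]: cell i - r + t for t = 0..2r
   (i - r + t computed as i + (n*r - r + t) mod n). *)
Definition window_cell (n r : nat) (i : 'I_n) (t : nat) : 'I_n :=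
  shift i (n * r - r + t).

Definition nzeros (n r : nat) (s : 'I_n -> bool) (i : 'I_n) : nat :=
  count (fun t => ~~ s (window_cell r i t)) (iota 0 (2 * r).+1).
Definition nones (n r : nat) (s : 'I_n -> bool) (i : 'I_n) : nat :=
  count (fun t => s (window_cell r i t)) (iota 0 (2 * r).+1).

Definition maj (n r : nat) (s : 'I_n -> bool) : 'I_n -> bool :=
  fun i => ~~ (nones r s i < nzeros r s i).

(* membership of k in the cyclic interval [i, j] = {i, i+1, ..., j} *)
Definition in_cint (n : nat) (i j k : 'I_n) : bool :=
  ((k + n - i) %% n <= (j + n - i) %% n).

(* B^beta(s): intervals [i,j] (as pairs (i,j)) that are maximal beta-blocks *)
Definition blocks (n : nat) (beta : bool) (s : 'I_n -> bool) : {set 'I_n * 'I_n} :=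
  [set p : 'I_n * 'I_n |
    [&& [forall k : 'I_n, in_cint p.1 p.2 k ==> (s k == beta)],
        s (pred_cell p.1) == ~~ beta &
        s (succ_cell p.2) == ~~ beta]].

Definition B (n : nat) (s : 'I_n -> bool) : {set 'I_n * 'I_n} :=
  blocks false s :|: blocks true s.

Definition b (n : nat) (s : 'I_n -> bool) : nat := #|B s|.

From mathcomp Require Import all_boot zify.
Set Implicit Arguments. Unset Strict Implicit. Unset Printing Implicit Defensive.

(* Both b(s) and b(maj_r s) count boundary cells, i.e. cells x with
   s(x) <> s(x+1), since a maximal block is determined by its right end.
   When x is a boundary cell of s' = maj_r s, sliding the window from x to
   x+1 drops cell x-r and adds cell x+r+1, so s(x-r) = s'(x) and
   s(x+r+1) = s'(x+1): some first cell x-r+a of this stretch is a boundary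
   cell of s.  Moreover s' keeps the value s'(x+1) on x+1, ..., x+a+1, since
   the cells leaving the window there still carry the old value s'(x).
   This gap between consecutive boundary cells of s' makes x |-> x-r+a
   injective. *)

Definition first_change (f : nat -> bool) (m : nat) : nat :=
  find (fun t => f t != f t.+1) (iota 0 m).

Section FirstChange.
Variables (f : nat -> bool) (m : nat).

Lemma first_change_le : first_change f m <= m.
Proof. by rewrite -[leqRHS](size_iota 0) find_size. Qed.

Lemma first_change_const t : t <= first_change f m -> f t = f 0.
Proof.
elim: t => [//|t IH] lt_t; rewrite -IH ?(ltnW lt_t) //.
have := before_find 0 lt_t; rewrite nth_iota ?add0n => [/negbFE/eqP //|].
exact: leq_trans lt_t first_change_le.
Qed.

Lemma first_change_lt : f 0 != f m -> first_change f m < m.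
Proof.
move=> neq_0m; rewrite ltn_neqAle first_change_le andbT.
by apply: contra neq_0m => /eqP eq_m; rewrite -eq_m first_change_const.
Qed.

Lemma first_change_neq :
  first_change f m < m -> f (first_change f m) != f (first_change f m).+1.
Proof.
move=> lt_m; have has_change : has (fun t => f t != f t.+1) (iota 0 m).
  by rewrite has_find size_iota.
by have := nth_find 0 has_change; rewrite nth_iota.
Qed.

Lemma first_changeE a : a < m -> (forall t, t <= a -> f t = f 0) ->
  f a.+1 != f 0 -> first_change f m = a.
Proof.
move=> lt_am const_a neq_a; case: (ltngtP (first_change f m) a) => // [lt_fa | lt_af].
- have := first_change_neq (ltn_trans lt_fa lt_am).
  by rewrite !const_a ?eqxx // ltnW.
- by rewrite (first_change_const lt_af) eqxx in neq_a.
Qed.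

End FirstChange.

Section Cells.
Variable n : nat.
Hypothesis n_gt0 : 0 < n.
Implicit Types (i j k : 'I_n) (s : 'I_n -> bool).

Lemma shiftD i d e : shift (shift i d) e = shift i (d + e).
Proof. by apply: val_inj; rewrite /= modnDml addnA. Qed.

Lemma shift0 i : shift i 0 = i.
Proof. by apply: val_inj; rewrite /= addn0 modn_small. Qed.

Lemma shiftDn i d : shift i (d + n) = shift i d.
Proof. by apply: val_inj; rewrite /= addnA modnDr. Qed.

Lemma shiftn i : shift i n = i.
Proof. by have := shiftDn i 0; rewrite add0n shift0. Qed.

Lemma eq_shift_mod i d e : shift i d = shift i e -> d = e %[mod n].
Proof. by move/(congr1 val)/eqP; rewrite /= eqn_modDl => /eqP. Qed.

(* The cyclic offset from [i] to [k]; [in_cint i j k] unfolds to [off i k <= off i j]. *)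
Definition off i k : nat := (k + n - i) %% n.

Lemma off_lt i k : off i k < n.
Proof. exact: ltn_pmod. Qed.

Lemma shift_off i k : shift i (off i k) = k.
Proof.
apply: val_inj; rewrite /= /off modnDmr.
have -> : i + (k + n - i) = k + n by have := ltn_ord i; lia.
by rewrite modnDr modn_small.
Qed.

Lemma off_shift i d : d < n -> off i (shift i d) = d.
Proof.
move=> lt_dn; have := eq_shift_mod (shift_off i (shift i d)).
by rewrite !modn_small ?off_lt.
Qed.

Definition boundary s : {set 'I_n} := [set x | s x != s (succ_cell x)].

(* Reading backwards from [j]: [shift j (n - d)] is the cell [j - d]. *)
Definition run_start s j : 'I_n :=
  shift j (n - first_change (fun d => s (shift j (n - d))) n.-1).

Lemma blocks_run_start beta s i j : (i, j) \in blocks beta s ->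
  [/\ j \in boundary s, s j = beta & i = run_start s j].
Proof.
rewrite inE /= => /and3P [/forallP in_block /eqP s_pred /eqP s_succ].
have {}in_block k : off i k <= off i j -> s k = beta.
  by move=> le_kj; apply/eqP; exact: (implyP (in_block k)).
set L := off i j; have ltLn : L < n := off_lt i j.
have j_shift : j = shift i L by rewrite shift_off.
have s_j : s j = beta by rewrite in_block.
subst beta.
have back_run d : d <= L -> shift j (n - d) = shift i (L - d).
  move=> le_dL; rewrite j_shift shiftD -(shiftDn i (L - d)); congr shift; lia.
have pred_i : shift j (n - L.+1) = pred_cell i.
  by rewrite j_shift shiftD; congr shift; lia.
have ltL : L < n.-1.
  rewrite ltn_neqAle -ltnS prednK // ltLn andbT; apply/eqP => eq_L.
  by move: s_pred; rewrite -pred_i eq_L (prednK n_gt0) subnn shift0; case: (s j).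
split=> //; first by rewrite inE s_succ; case: (s j).
rewrite /run_start (@first_changeE _ _ L) //.
- by rewrite j_shift shiftD (subnKC (ltnW ltLn)) shiftn.
- move=> d le_dL; rewrite subn0 shiftn back_run // in_block //.
  by rewrite off_shift ?leq_subr // (leq_ltn_trans (leq_subr d L)).
- by rewrite pred_i s_pred subn0 shiftn; case: (s j).
Qed.

Lemma run_start_blocks s j : j \in boundary s -> (run_start s j, j) \in blocks (s j) s.
Proof.
rewrite inE => s_succ; rewrite /run_start.
set f := fun d => s (shift j (n - d)); set a := first_change f n.-1.
have f0 : f 0 = s j by rewrite /f subn0 shiftn.
have lt_a : a < n.-1.
  apply: first_change_lt; rewrite f0 /f.
  have -> : n - n.-1 = 1 by lia.
  exact: s_succ.
have j_shift : shift (shift j (n - a)) a = j.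
  by rewrite shiftD subnK ?shiftn //; lia.
set i := shift j (n - a).
have off_ij : off i j = a by rewrite -j_shift off_shift //; lia.
rewrite inE /=; apply/and3P; split.
- apply/forallP => k; apply/implyP => in_k; apply/eqP.
  have le_ka : off i k <= a by rewrite -off_ij.
  rewrite -(shift_off i k) shiftD.
  have -> : n - a + off i k = n - (a - off i k) by lia.
  by rewrite -f0; exact: (first_change_const (leq_subr (off i k) a)).
- have := first_change_neq (f := f) lt_a; rewrite -/a (first_change_const (leqnn a)) f0.
  rewrite /pred_cell shiftD.
  have -> : n - a + n.-1 = n - a.+1 + n by lia.
  by rewrite shiftDn /f; case: (s j); case: (s (shift j (n - a.+1))).
- by move: s_succ; case: (s j); case: (s (succ_cell j)).
Qed.

Lemma B_boundaryE s : B s = [set (run_start s j, j) | j in boundary s].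
Proof.
apply/setP => -[i j]; apply/idP/imsetP => [|[k k_bd [-> ->]]].
- by case/setUP => /blocks_run_start [j_bd _ ->]; exists j.
- by rewrite in_setU; case: (s k) (run_start_blocks k_bd) => ->; rewrite ?orbT.
Qed.

Lemma b_boundary s : b s = #|boundary s|.
Proof. by rewrite /b B_boundaryE card_imset // => j k [_]. Qed.
End Cells.

Section Majority.
Variables (n r : nat) (s : 'I_n -> bool).
Hypothesis n_gt0 : 0 < n.
Implicit Types (i x y : 'I_n).

Local Notation K := (2 * r).+1.

Lemma window_cell_shift i d t : window_cell r (shift i d) t = window_cell r i (d + t).
Proof. by rewrite /window_cell shiftD; congr shift; lia. Qed.

Lemma window_cellS i t : window_cell r i t.+1 = succ_cell (window_cell r i t).
Proof. by rewrite /succ_cell /window_cell shiftD addnS addn1. Qed.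

Lemma maj_nones i : maj r s i = (r < nones r s i).
Proof.
have : nones r s i + nzeros r s i = K.
  by rewrite /nones /nzeros count_predC size_iota.
by rewrite /maj -leqNgt; case: leqP; case: leqP; lia.
Qed.

Lemma nones_succ i :
  nones r s (succ_cell i) + s (window_cell r i 0) = nones r s i + s (window_cell r i K).
Proof.
rewrite /nones (eq_count (a2 := fun t => s (window_cell r i t.+1))); last first.
  by move=> t; rewrite /succ_cell window_cell_shift.
rewrite -(count_map succn (fun t => s (window_cell r i t))) -(iotaDl 1) addnC.
transitivity (count (fun t => s (window_cell r i t)) (iota 0 K.+1)) => //.
by rewrite -[K.+1]addn1 iotaD count_cat /= addn0.
Qed.

Lemma maj_succ_keep i :
  s (window_cell r i 0) != maj r s i -> maj r s (succ_cell i) = maj r s i.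
Proof.
rewrite !maj_nones; move: (nones_succ i).
by case: (s (window_cell r i 0)); case: (s (window_cell r i K));
   case: leqP; case: leqP => //=; lia.
Qed.

Lemma maj_boundary_window i : i \in boundary (maj r s) ->
  s (window_cell r i 0) = maj r s i /\ s (window_cell r i K) = maj r s (succ_cell i).
Proof.
rewrite inE !maj_nones; move: (nones_succ i).
by case: (s (window_cell r i 0)); case: (s (window_cell r i K));
   case: leqP; case: leqP => //=; lia.
Qed.

Definition change_offset x : nat := first_change (fun t => s (window_cell r x t)) K.

Definition change_cell x : 'I_n := window_cell r x (change_offset x).

Section BoundaryOfMaj.
Variable x : 'I_n.
Hypothesis x_bd : x \in boundary (maj r s).

Lemma change_offset_lt : change_offset x < K.
Proof.
have [s_first s_last] := maj_boundary_window x_bd.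
by apply: first_change_lt; rewrite s_first s_last; move: x_bd; rewrite inE.
Qed.

Lemma s_window_before_change t :
  t <= change_offset x -> s (window_cell r x t) = maj r s x.
Proof.
move=> le_t; rewrite -(maj_boundary_window x_bd).1.
exact: (first_change_const (f := fun t => s (window_cell r x t)) le_t).
Qed.

Lemma change_cell_boundary : change_cell x \in boundary s.
Proof.
rewrite inE -window_cellS.
exact: (first_change_neq (f := fun t => s (window_cell r x t)) change_offset_lt).
Qed.

Lemma s_change_cell : s (change_cell x) = maj r s x.
Proof. exact: s_window_before_change. Qed.

Lemma maj_after_boundary t :
  t <= change_offset x -> maj r s (shift x t.+1) = ~~ maj r s x.
Proof.
elim: t => [_ | t IH lt_t].
  by change (maj r s (succ_cell x) = ~~ maj r s x); move: x_bd; rewrite inE;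
     case: (maj r s x); case: (maj r s (succ_cell x)).
have IHt := IH (ltnW lt_t).
have -> : shift x t.+2 = succ_cell (shift x t.+1) by rewrite /succ_cell shiftD addn1.
rewrite maj_succ_keep // window_cell_shift addn0 s_window_before_change // IHt.
by case: (maj r s x).
Qed.
End BoundaryOfMaj.

Lemma change_cell_inj : {in boundary (maj r s) &, injective change_cell}.
Proof.
move=> x y x_bd y_bd eq_xy; case: (eqVneq x y) => // neq_xy; exfalso.
have eq_maj : maj r s y = maj r s x.
  by rewrite -(s_change_cell x_bd) -(s_change_cell y_bd) eq_xy.
have [m lt_mn y_shift] : exists2 m, m < n & y = shift x m.
  by exists (off x y); [exact: off_lt | rewrite shift_off].
have m_gt0 : 0 < m.
  by rewrite lt0n; apply/eqP => m0; move/eqP: neq_xy; apply; rewrite y_shift m0 shift0.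
have x_shift : x = shift y (n - m) by rewrite y_shift shiftD (subnKC (ltnW lt_mn)) shiftn.
have far_x : (change_offset x).+1 < m.
  rewrite ltnNge; apply/negP => le_m.
  have le_t : m.-1 <= change_offset x by rewrite -ltnS prednK.
  have := maj_after_boundary x_bd le_t; rewrite prednK // -y_shift eq_maj.
  by case: (maj r s x).
have far_y : (change_offset y).+1 < n - m.
  rewrite ltnNge; apply/negP => le_m.
  have le_t : (n - m).-1 <= change_offset y by rewrite -ltnS prednK ?subn_gt0.
  have := maj_after_boundary y_bd le_t; rewrite prednK ?subn_gt0 // -x_shift eq_maj.
  by case: (maj r s x).
move: eq_xy; rewrite /change_cell {1}y_shift window_cell_shift /window_cell.
move/eq_shift_mod/eqP; rewrite eqn_modDl !modn_small; lia.
Qed.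

Lemma card_boundary_maj : #|boundary (maj r s)| <= #|boundary s|.
Proof.
rewrite -(card_in_imset change_cell_inj); apply/subset_leq_card/subsetP.
by move=> _ /imsetP [x x_bd ->]; exact: change_cell_boundary.
Qed.
End Majority.

Theorem claim11 (r n : nat) (s s' : 'I_n -> bool) :
  1 <= r -> 0 < n -> (forall i, maj r s i = s' i) -> b s' <= b s.
Proof.
(* The argument works for every radius. *)
move=> _ n_gt0 maj_s; rewrite !b_boundary //.
have -> : boundary s' = boundary (maj r s) by apply/setP => x; rewrite !inE !maj_s.
exact: card_boundary_maj.
Qed.
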